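(* Let $R$ be a commutative ring, $s\in R$, and let $A\in M_2(R;s)$ with $A\notin J\big(M_2(R;s)\big)$. If $\det_s(A)\in J(R)$ and $tr(A)\in J(R)$, then $A$ is not strongly $J$-clean in $M_2(R;s)$.
   Context: $J(\cdot)$ denotes the Jacobson radical. For a commutative ring $R$ and $s\in R$, $M_2(R;s)$ denotes the ring whose elements are the $2\times 2$ arrays $\left[\begin{smallmatrix} a&b\\ c&d\end{smallmatrix}\right]$ with $a,b,c,d\in R$, with componentwise addition and multiplication $\left[\begin{smallmatrix} a&b\\ c&d\end{smallmatrix}\right]\left[\begin{smallmatrix} a'&b'\\ c'&d'\end{smallmatrix}\right]=\left[\begin{smallmatrix} aa'+s^2bc'&ab'+bd'\\ ca'+dc'&s^2cb'+dd'\end{smallmatrix}\right]$. For $A=\left[\begin{smallmatrix} a&b\\ c&d\end{smallmatrix}\right]$, $\det_s(A)=ad-s^2bc$ and $tr(A)=a+d$. An element $a$ of a ring $T$ is strongly $J$-clean if there is an idempotent $e\in T$ with $ae=ea$ and $a-e\in J(T)$. *)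

From HB Require Import structures.
From mathcomp Require Import all_boot all_order all_algebra.
From mathcomp Require Import ring.
Set Implicit Arguments. Unset Strict Implicit. Unset Printing Implicit Defensive.
Import Order.TTheory GRing.Theory.
Local Open Scope ring_scope.

(* Jacobson radical of an (associative, unital, possibly noncommutative) ring T,
   via its standard elementwise description:
   a \in J(T)  <->  for every r, 1 - r a is a (two-sided) unit of T. *)
Definition isunit (T : pzRingType) (u : T) : Prop :=
  exists v : T, v * u = 1 /\ u * v = 1.

Definition jacobson (T : pzRingType) (a : T) : Prop :=
  forall r : T, isunit (1 - r * a).

Definition strongly_J_clean (T : pzRingType) (a : T) : Prop :=
  exists e : T, e * e = e /\ a * e = e * a /\ jacobson (a - e).

(* The ring M_2(R;s): carrier R^4, entries ((a,b),(c,d)) = [a b; c d]. *)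
Definition M2s (R : comPzRingType) (s : R) : Type := ((R * R) * (R * R))%type.

Section M2sRing.
Variables (R : comPzRingType) (s : R).

HB.instance Definition _ := GRing.Zmodule.on (M2s s).

Definition mx2 (a b c d : R) : M2s s := ((a, b), (c, d)).
Definition e11 (A : M2s s) : R := A.1.1.
Definition e12 (A : M2s s) : R := A.1.2.
Definition e21 (A : M2s s) : R := A.2.1.
Definition e22 (A : M2s s) : R := A.2.2.

Definition M2s_one : M2s s := mx2 1 0 0 1.
Definition M2s_mul (A B : M2s s) : M2s s :=
  mx2 (e11 A * e11 B + s ^+ 2 * e12 A * e21 B) (e11 A * e12 B + e12 A * e22 B)
      (e21 A * e11 B + e22 A * e21 B) (s ^+ 2 * e21 A * e12 B + e22 A * e22 B).

Lemma M2s_mulA : associative M2s_mul.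
Proof.
move=> [[a b] [c d]] [[a1 b1] [c1 d1]] [[a2 b2] [c2 d2]].
rewrite /M2s_mul /mx2 /e11 /e12 /e21 /e22 /=.
congr (_, _); congr (_, _); ring.
Qed.

Lemma M2s_mul1r : left_id M2s_one M2s_mul.
Proof.
move=> [[a b] [c d]]; rewrite /M2s_mul /M2s_one /mx2 /e11 /e12 /e21 /e22 /=.
congr (_, _); congr (_, _); ring.
Qed.

Lemma M2s_mulr1 : right_id M2s_one M2s_mul.
Proof.
move=> [[a b] [c d]]; rewrite /M2s_mul /M2s_one /mx2 /e11 /e12 /e21 /e22 /=.
congr (_, _); congr (_, _); ring.
Qed.

Lemma mx2D (a b c d a' b' c' d' : R) :
  mx2 a b c d + mx2 a' b' c' d' = mx2 (a + a') (b + b') (c + c') (d + d').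
Proof. by []. Qed.
Lemma e11D (A B : M2s s) : e11 (A + B) = e11 A + e11 B. Proof. by []. Qed.
Lemma e12D (A B : M2s s) : e12 (A + B) = e12 A + e12 B. Proof. by []. Qed.
Lemma e21D (A B : M2s s) : e21 (A + B) = e21 A + e21 B. Proof. by []. Qed.
Lemma e22D (A B : M2s s) : e22 (A + B) = e22 A + e22 B. Proof. by []. Qed.

Lemma M2s_mulDl : left_distributive M2s_mul +%R.
Proof.
move=> A B C; rewrite /M2s_mul mx2D !e11D !e12D !e21D !e22D; congr mx2; ring.
Qed.

Lemma M2s_mulDr : right_distributive M2s_mul +%R.
Proof.
move=> A B C; rewrite /M2s_mul mx2D !e11D !e12D !e21D !e22D; congr mx2; ring.
Qed.

HB.instance Definition _ := GRing.Zmodule_isPzRing.Build (M2s s)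
  M2s_mulA M2s_mul1r M2s_mulr1 M2s_mulDl M2s_mulDr.

Definition det_s (A : M2s s) : R := e11 A * e22 A - s ^+ 2 * e12 A * e21 A.
Definition tr_s (A : M2s s) : R := e11 A + e22 A.
End M2sRing.

(* By Cayley-Hamilton, A^2 = tr(A) A - det_s(A) I, and a scalar matrix with
   entry in J(R) lies in J(M_2(R;s)) (its inverse-witnesses come from the
   adjugate); hence A^2 is in the Jacobson radical.  If A = e + j with e
   idempotent and j in the radical, then e = e^2 = (A - j)^2 is in the radical
   too, and the only idempotent in the radical is 0; so A = j would be in the
   radical. *)
From HB Require Import structures.
From mathcomp Require Import all_boot all_order all_algebra.
From mathcomp Require Import ring.

Import GRing.Theory.
Local Open Scope ring_scope.

Section Jacobson.
Variable T : pzRingType.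
Implicit Types a b e j x y : T.

Lemma isunitM a b : isunit a -> isunit b -> isunit (a * b).
Proof.
move=> [u [ua au]] [v [vb bv]]; exists (v * u); split.
- by rewrite mulrA -(mulrA v) ua mulr1 vb.
- by rewrite mulrA -(mulrA a) bv mulr1 au.
Qed.

Lemma isunit_1BMC x y : isunit (1 - x * y) -> isunit (1 - y * x).
Proof.
move=> [u [uxy xyu]]; exists (1 + y * u * x); split.
- have -> : (1 + y * u * x) * (1 - y * x) =
            1 - y * x + y * (u * (1 - x * y)) * x.
    by rewrite mulrDl mul1r !mulrBr !mulrBl ?mulr1 ?mul1r !mulrA ?addrA.
  by rewrite uxy mulr1 subrK.
- have -> : (1 - y * x) * (1 + y * u * x) =
            1 - y * x + y * ((1 - x * y) * u) * x.
    rewrite mulrDr mulr1 ?mulrBr ?mulrBl ?mulr1 ?mul1r !mulrA.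
    by rewrite ?mulrBr ?mulrBl ?mul1r !mulrA.
  by rewrite xyu mulr1 subrK.
Qed.

Lemma jacobsonMl a b : jacobson a -> jacobson (b * a).
Proof. by move=> Ja r; rewrite mulrA. Qed.

Lemma jacobsonMr a b : jacobson a -> jacobson (a * b).
Proof. by move=> Ja r; apply: isunit_1BMC; rewrite -mulrA; apply: isunit_1BMC. Qed.

Lemma jacobsonD a b : jacobson a -> jacobson b -> jacobson (a + b).
Proof.
move=> Ja Jb r; have [v [_ av]] := Ja r.
have -> : 1 - r * (a + b) = (1 - r * a) * (1 - (v * r) * b).
  by rewrite mulrBr mulr1 !mulrA av mul1r mulrDr opprD addrA.
exact: isunitM.
Qed.

Lemma jacobsonN a : jacobson a -> jacobson (- a).
Proof. by rewrite -mulN1r; apply: jacobsonMl. Qed.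

Lemma jacobsonB a b : jacobson a -> jacobson b -> jacobson (a - b).
Proof. by move=> Ja /jacobsonN; apply: jacobsonD. Qed.

Lemma jacobson_idem_eq0 e : e * e = e -> jacobson e -> e = 0.
Proof.
move=> ee /(_ 1) [u [_ eu]]; rewrite mul1r in eu.
have : e * (1 - e) * u = 0 by rewrite mulrBr mulr1 ee subrr mul0r.
by rewrite -mulrA eu mulr1.
Qed.

Lemma jacobson_sqrB a j :
  jacobson (a * a) -> jacobson j -> jacobson ((a - j) * (a - j)).
Proof.
move=> Jaa Jj; rewrite mulrBl !mulrBr.
apply: jacobsonB; first by apply: jacobsonB => //; apply: jacobsonMl.
by apply: jacobsonB; [apply: jacobsonMr | apply: jacobsonMl].
Qed.

Lemma strongly_J_clean_sqr_jacobson a :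
  jacobson (a * a) -> strongly_J_clean a -> jacobson a.
Proof.
move=> Jaa [e [ee [_ Jj]]].
have Je : jacobson e.
  rewrite -ee (_ : e = a - (a - e)); last by rewrite opprB addrC subrK.
  exact: jacobson_sqrB.
by rewrite -(subr0 a) -(jacobson_idem_eq0 e ee Je).
Qed.

End Jacobson.

Section M2sJacobson.
Variables (R : comPzRingType) (s : R).
Implicit Types A B M : M2s s.

Definition scalar_M2s (c : R) : M2s s := mx2 s c 0 0 c.
Definition adj_M2s A : M2s s := mx2 s (e22 A) (- e12 A) (- e21 A) (e11 A).

Lemma M2s_mulE A B : A * B = M2s_mul A B. Proof. by []. Qed.

Lemma M2s_subE A B :
  A - B = mx2 s (e11 A - e11 B) (e12 A - e12 B) (e21 A - e21 B) (e22 A - e22 B).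
Proof. by case: A => [[? ?] [? ?]]; case: B => [[? ?] [? ?]]. Qed.

Lemma M2s_oneE : (1 : M2s s) = mx2 s 1 0 0 1. Proof. by []. Qed.

Local Ltac M2s_unfold :=
  rewrite ?M2s_mulE ?M2s_subE ?M2s_oneE /M2s_mul /scalar_M2s /adj_M2s
          /tr_s /det_s /mx2 /e11 /e12 /e21 /e22 /=.
Local Ltac M2s_ring := M2s_unfold; congr (_, _); congr (_, _); ring.

Lemma M2s_Cayley_Hamilton A :
  A * A = scalar_M2s (tr_s A) * A - scalar_M2s (det_s A).
Proof. case: A => [[a b] [c d]]; M2s_ring. Qed.

Lemma mulr_adj_M2s A : A * adj_M2s A = scalar_M2s (det_s A).
Proof. case: A => [[a b] [c d]]; M2s_ring. Qed.

Lemma mul_adj_M2s A : adj_M2s A * A = scalar_M2s (det_s A).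
Proof. case: A => [[a b] [c d]]; M2s_ring. Qed.

Lemma scalar_M2s_comm (c : R) A : A * scalar_M2s c = scalar_M2s c * A.
Proof. case: A => [[a b] [x d]]; M2s_ring. Qed.

Lemma scalar_M2sM (c d : R) : scalar_M2s c * scalar_M2s d = scalar_M2s (c * d).
Proof. M2s_ring. Qed.

Lemma isunit_det_s M : isunit (det_s M) -> isunit M.
Proof.
move=> [v [vd dv]]; exists (scalar_M2s v * adj_M2s M); split.
- by rewrite -mulrA mul_adj_M2s scalar_M2sM vd.
- by rewrite mulrA scalar_M2s_comm -mulrA mulr_adj_M2s scalar_M2sM vd.
Qed.

Lemma det_s_1B_scalar (c : R) B :
  det_s (1 - B * scalar_M2s c) = 1 - (tr_s B - c * det_s B) * c.
Proof. case: B => [[a b] [x d]]; M2s_unfold; ring. Qed.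

Lemma jacobson_scalar_M2s (c : R) : jacobson c -> jacobson (scalar_M2s c).
Proof. by move=> Jc B; apply: isunit_det_s; rewrite det_s_1B_scalar; apply: Jc. Qed.

Lemma jacobson_M2s_sqr A :
  jacobson (det_s A) -> jacobson (tr_s A) -> jacobson (A * A).
Proof.
move=> Jdet Jtr; rewrite M2s_Cayley_Hamilton.
by apply: jacobsonB; [apply: jacobsonMr | ]; apply: jacobson_scalar_M2s.
Qed.

End M2sJacobson.

Theorem proposition3p2 (R : comPzRingType) (s : R) (A : M2s s) :
  ~ jacobson A ->
  jacobson (det_s A) -> jacobson (tr_s A) ->
  ~ strongly_J_clean A.
Proof.
move=> notJA Jdet Jtr sJA; apply: notJA.
by apply: strongly_J_clean_sqr_jacobson sJA; apply: jacobson_M2s_sqr.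
Qed.
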